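(* Let $\mathbf{A}\in\mathbb{R}^{m\times n}$ have all rows nonzero, let $b\in\mathcal{R}(\mathbf{A})$, and let $f:\mathbb{R}^n\to\mathbb{R}$ be finite everywhere and $1$-strongly convex, with $\hat x$ the unique solution of $\min_x f(x)$ subject to $\mathbf{A}x=b$. Fix a partition of the rows into $M$ blocks. Consider the block accelerated randomized Bregman–Kaczmarz method (ARBK): $z^0=y^0=0\in\mathbb{R}^m$, $\theta_0=1/M$, and for $k\ge0$: $v^k=(1-\theta_k)y^k+\theta_k z^k$; choose $i=i_k\in[M]$ uniformly at random, independently of the past; $$z^{k+1}=z^k-\frac{1}{M\theta_k}\,\frac{\mathbf{U}_i\big(\mathbf{A}_{(i)}\nabla f^*(\mathbf{A}^\top v^k)-b_{(i)}\big)}{\|\mathbf{A}_{(i)}\|_2^2},\quad y^{k+1}=v^k+M\theta_k(z^{k+1}-z^k),\quad \theta_{k+1}=\frac{\sqrt{\theta_k^4+4\theta_k^2}-\theta_k^2}{2},$$ and set $d^k=\mathbf{A}^\top y^k$, $x^k=\nabla f^*(d^k)$. Let $\hat y$ be any minimizer of $\Psi(y)=f^*(\mathbf{A}^\top y)-b^\top y$. Then for all $k\ge1$, $$\tfrac12\mathbb{E}\big[\|x^k-\hat x\|_2^2\big]\le\mathbb{E}\big[D_f^{d^k}(x^k,\hat x)\big]\le\frac{4M^2}{(k-1+2M)^2}\,C_0,$$ where $C_0=\big(1-\tfrac1M\big)D_f^{d^0}(x^0,\hat x)+\tfrac12\|y^0-\hat y\|_{\mathbf{B}}^2$.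
   Context: Block notation: $[m]$ is partitioned into $M$ consecutive blocks of sizes $m_1,\dots,m_M$; $\mathbf{I}_m=(\mathbf{U}_1,\dots,\mathbf{U}_M)$ with $\mathbf{U}_i\in\mathbb{R}^{m\times m_i}$, $\mathbf{A}_{(i)}=\mathbf{U}_i^\top\mathbf{A}$, $b_{(i)}=\mathbf{U}_i^\top b$, $y_{(i)}=\mathbf{U}_i^\top y$. $\|y\|_{\mathbf{B}}^2=\sum_{i=1}^M\|\mathbf{A}_{(i)}\|_2^2\,\|y_{(i)}\|_2^2$. $f^*$ is the Fenchel conjugate of $f$ (differentiable). For $x^*\in\partial f(x)$, $D_f^{x^*}(x,y)=f(y)-f(x)-\langle x^*,y-x\rangle$. Expectations are over the random block indices. *)

From HB Require Import structures.
From mathcomp Require Import all_boot all_order all_algebra.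
From mathcomp Require Import all_classical all_reals all_analysis.
Set Implicit Arguments. Unset Strict Implicit. Unset Printing Implicit Defensive.
Import Order.TTheory GRing.Theory Num.Theory.
Local Open Scope ring_scope.
Local Open Scope classical_set_scope.

Section ARBK.
Variable R : realType.

Definition dotv {n} (u v : 'cV[R]_n) : R := \sum_(j < n) u j 0 * v j 0.
Definition sqnorm2 {n} (v : 'cV[R]_n) : R := dotv v v.
Definition norm2 {n} (v : 'cV[R]_n) : R := Num.sqrt (sqnorm2 v).

Definition opnorm2 {m n} (B : 'M[R]_(m, n)) : R :=
  sup [set norm2 (B *m x) | x in [set x : 'cV[R]_n | norm2 x = 1]].

Definition strongly_convex1 {n} (f : 'cV[R]_n -> R) : Prop :=
  forall (x y : 'cV[R]_n) (t : R), 0 <= t <= 1 ->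
    f (t *: x + (1 - t) *: y) <=
      t * f x + (1 - t) * f y - t * (1 - t) / 2 * sqnorm2 (x - y).

Definition fconj {n} (f : 'cV[R]_n -> R) (d : 'cV[R]_n) : R :=
  sup [set dotv d x - f x | x in [set: 'cV[R]_n]].

Definition grad {n} (F : 'cV[R]_n -> R) (d : 'cV[R]_n) : 'cV[R]_n :=
  \col_(j < n) derive1 (fun t : R => F (d + t *: delta_mx j 0)) 0.

Definition bregman {n} (f : 'cV[R]_n -> R) (xs x y : 'cV[R]_n) : R :=
  f y - f x - dotv xs (y - x).

(* Block structure: blk r is the block of row r.  Consecutive blocks,
   all nonempty: blk is nondecreasing and surjective. *)
Definition consecutive_partition {m M} (blk : 'I_m -> 'I_M) : Prop :=
  (forall r s : 'I_m, (r <= s)%N -> (blk r <= blk s)%N) /\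
  (forall i : 'I_M, exists r : 'I_m, blk r = i).

(* U_i U_i^T A : the rows of block i, other rows zeroed *)
Definition blockA {m n M} (blk : 'I_m -> 'I_M) (A : 'M[R]_(m, n)) (i : 'I_M)
  : 'M[R]_(m, n) := \matrix_(r, j) (if blk r == i then A r j else 0).
(* U_i U_i^T y *)
Definition blockv {m M} (blk : 'I_m -> 'I_M) (y : 'cV[R]_m) (i : 'I_M)
  : 'cV[R]_m := \col_r (if blk r == i then y r 0 else 0).

(* ||A_(i)||_2 ; note ||U_i^T A||_2 = ||U_i U_i^T A||_2 *)
Definition blocknorm {m n M} (blk : 'I_m -> 'I_M) (A : 'M[R]_(m, n)) i : R :=
  opnorm2 (blockA blk A i).

Definition sqnormB {m n M} (blk : 'I_m -> 'I_M) (A : 'M[R]_(m, n))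
  (y : 'cV[R]_m) : R :=
  \sum_(i < M) blocknorm blk A i ^+ 2 * sqnorm2 (blockv blk y i).

Record state m := St { st_y : 'cV[R]_m; st_z : 'cV[R]_m; st_th : R }.

Definition arbk_step {m n M} (f : 'cV[R]_n -> R) (blk : 'I_m -> 'I_M)
  (A : 'M[R]_(m, n)) (b : 'cV[R]_m) (s : state m) (i : 'I_M) : state m :=
  let th := st_th s in
  let v := (1 - th) *: st_y s + th *: st_z s in
  let r := blockv blk (A *m grad (fconj f) (A^T *m v) - b) i in
  let z' := st_z s - ((M%:R * th)^-1 / blocknorm blk A i ^+ 2) *: r in
  let y' := v + (M%:R * th) *: (z' - st_z s) in
  St y' z' ((Num.sqrt (th ^+ 4 + 4 * th ^+ 2) - th ^+ 2) / 2).

Definition arbk_init m M : state m := St 0 0 (M%:R^-1).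

Definition arbk_state {m n M} f blk (A : 'M[R]_(m, n)) b (ix : seq 'I_M)
  : state m := foldl (arbk_step f blk A b) (arbk_init m M) ix.

(* Expectation over i_0, ..., i_{k-1} i.i.d. uniform on [M] *)
Definition expect_k (M k : nat) (X : seq 'I_M -> R) : R :=
  (M%:R ^+ k)^-1 * \sum_(t : k.-tuple 'I_M) X (val t).

End ARBK.

(* The dual function [Psi y = f^*(A^T y) - <b, y>] is convex, and 1-smooth
   along [A^T]: since [f] is 1-strongly convex, [<d, x> - f x] has a unique
   maximiser [x(d)], which is the gradient of [f^*], and [f^*] lies between its
   tangent at [d] and that tangent plus [|d' - d|^2 / 2].  Strong duality turns
   the Bregman distance [D_f^{d_k}(x_k, xhat)] into the dual gap
   [Psi y_k - Psi yhat], and the first inequality is strong convexity at [x_k].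
   ARBK is an accelerated randomized block coordinate descent on [Psi]: the
   potential [(1 - th_k) / th_k^2 (Psi y_k - Psi yhat) + M^2 / 2 |z_k - yhat|_B^2]
   does not increase in expectation, and [1 / th_k >= M + k / 2]. *)

From HB Require Import structures.
From mathcomp Require Import all_boot all_order all_algebra.
From mathcomp Require Import all_classical all_reals all_analysis.
From mathcomp Require Import zify ring lra.
Import Order.TTheory GRing.Theory Num.Theory.
Set Implicit Arguments. Unset Strict Implicit. Unset Printing Implicit Defensive.
Local Open Scope ring_scope.

Section Euclid.
Variables (R : realType) (n : nat).
Implicit Types (u v w x : 'cV[R]_n) (a : R).

Lemma dotvC u v : dotv u v = dotv v u.
Proof. by apply: eq_bigr => j _; rewrite mulrC. Qed.

Lemma dotvDl u v w : dotv (u + v) w = dotv u w + dotv v w.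
Proof. by rewrite /dotv -big_split; apply: eq_bigr => j _; rewrite !mxE mulrDl. Qed.

Lemma dotvZl a u w : dotv (a *: u) w = a * dotv u w.
Proof. by rewrite /dotv mulr_sumr; apply: eq_bigr => j _; rewrite !mxE mulrA. Qed.

Lemma dotvNl u w : dotv (- u) w = - dotv u w.
Proof. by rewrite -scaleN1r dotvZl mulN1r. Qed.

Lemma dotvBl u v w : dotv (u - v) w = dotv u w - dotv v w.
Proof. by rewrite dotvDl dotvNl. Qed.

Lemma dotvDr u v w : dotv w (u + v) = dotv w u + dotv w v.
Proof. by rewrite dotvC dotvDl !(dotvC w). Qed.

Lemma dotvZr a u w : dotv w (a *: u) = a * dotv w u.
Proof. by rewrite dotvC dotvZl dotvC. Qed.

Lemma dotvNr u w : dotv w (- u) = - dotv w u.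
Proof. by rewrite dotvC dotvNl dotvC. Qed.

Lemma dotvBr u v w : dotv w (u - v) = dotv w u - dotv w v.
Proof. by rewrite dotvDr dotvNr. Qed.

Lemma dotv0r w : dotv w 0 = 0.
Proof. by rewrite /dotv big1 // => j _; rewrite mxE mulr0. Qed.

Lemma dotv_sumr I (r : seq I) (P : pred I) u (F : I -> 'cV[R]_n) :
  dotv u (\sum_(i <- r | P i) F i) = \sum_(i <- r | P i) dotv u (F i).
Proof.
rewrite /dotv exchange_big /=; apply: eq_bigr => j _.
by rewrite summxE mulr_sumr.
Qed.

Lemma dotv_delta (j : 'I_n) x : dotv (delta_mx j 0) x = x j 0.
Proof.
rewrite /dotv (bigD1 j) //= big1 => [|i ij]; first by rewrite !mxE !eqxx mul1r addr0.
by rewrite !mxE (negbTE ij) mul0r.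
Qed.

Lemma sqnorm2E x : sqnorm2 x = \sum_j x j 0 ^+ 2.
Proof. by apply: eq_bigr => j _; rewrite expr2. Qed.

Lemma sqnorm2_ge0 x : 0 <= sqnorm2 x.
Proof. by rewrite sqnorm2E sumr_ge0 // => j _; rewrite sqr_ge0. Qed.

Lemma sqnorm2_eq0 x : (sqnorm2 x == 0) = (x == 0).
Proof.
apply/idP/eqP => [|->]; last by rewrite /sqnorm2 dotv0r.
rewrite sqnorm2E psumr_eq0 => [/allP x0|j _]; last exact: sqr_ge0.
apply/matrixP => j k; rewrite (ord1 k) mxE.
by have /implyP/(_ isT) := x0 j (mem_index_enum _); rewrite sqrf_eq0 => /eqP.
Qed.

Lemma sqnorm2B u v : sqnorm2 (u - v) = sqnorm2 u - 2 * dotv u v + sqnorm2 v.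
Proof. rewrite /sqnorm2 !dotvBl !dotvBr (dotvC v u); ring. Qed.

Lemma sqnorm2Z a u : sqnorm2 (a *: u) = a ^+ 2 * sqnorm2 u.
Proof. rewrite /sqnorm2 dotvZl dotvZr; ring. Qed.

Lemma sqnorm2N u : sqnorm2 (- u) = sqnorm2 u.
Proof. by rewrite /sqnorm2 dotvNl dotvNr opprK. Qed.

Lemma sqnorm2_delta (j : 'I_n) : sqnorm2 (delta_mx j 0 : 'cV[R]_n) = 1.
Proof. by rewrite /sqnorm2 dotv_delta mxE !eqxx. Qed.

Lemma dotv_le_sqnorm2 u v : 2 * dotv u v <= sqnorm2 u + sqnorm2 v.
Proof. have := sqnorm2_ge0 (u - v); rewrite sqnorm2B; lra. Qed.

Lemma sqr_coord_le_sqnorm2 x j : x j 0 ^+ 2 <= sqnorm2 x.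
Proof.
rewrite sqnorm2E (bigD1 j) //= lerDl sumr_ge0 // => i _.
exact: sqr_ge0.
Qed.

Lemma dotv_trmx_mul p (B : 'M[R]_(p, n)) (h : 'cV[R]_p) x :
  dotv (B^T *m h) x = dotv h (B *m x).
Proof.
rewrite /dotv; under eq_bigr do rewrite mxE mulr_suml.
rewrite exchange_big /=; apply: eq_bigr => i _.
by rewrite mxE mulr_sumr; apply: eq_bigr => j _; rewrite mxE mulrCA mulrA.
Qed.

Definition in_box s w := forall j, `|w j 0| <= s.

Definition l1norm x := \sum_j `|x j 0|.

Lemma dotv_le_box d w s : in_box s w -> dotv d w <= l1norm d * s.
Proof.
move=> ws; rewrite /dotv /l1norm mulr_suml; apply: ler_sum => j _.
by apply: le_trans (ler_norm _) _; rewrite normrM ler_wpM2l.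
Qed.

End Euclid.

Section RealFacts.
Variable R : realType.

Lemma le0_of_le_scaled (a c : R) :
  0 <= c -> (forall t, 0 < t <= 1 -> a <= t * c) -> a <= 0.
Proof.
move=> c0 H; rewrite leNgt; apply/negP => a0.
have ac : 0 < a + c by lra.
have t0 : 0 < a / (a + c) by rewrite divr_gt0.
have t1 : a / (a + c) <= 1 by rewrite ler_pdivrMr // mul1r; lra.
have := H _ (introT andP (conj t0 t1)).
rewrite mulrAC ler_pdivlMr // -subr_ge0; nra.
Qed.

Lemma le0_of_le_div_succ (x C : R) : (forall k, x <= C / k.+1%:R) -> x <= 0.
Proof.
move=> H; rewrite leNgt; apply/negP => x0.
have C0 : 0 <= C by have := H 0%N; rewrite divr1; lra.
have /archi_boundP k_gt : 0 <= C / x by rewrite divr_ge0 // ltW.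
set k := Num.bound (C / x) in k_gt.
have := H k; rewrite ler_pdivlMr ?ltr0Sn // => le_xk.
have : C < x * k.+1%:R.
  rewrite ltr_pdivrMr // in k_gt; apply: lt_le_trans k_gt _.
  by rewrite mulrC ler_pM2l // ler_nat.
lra.
Qed.

Lemma cauchy_coord_sup n (u : nat -> 'cV[R]_n) (e : nat -> R) :
  (forall k l j, `|u k j 0 - u l j 0| <= e k + e l) ->
  exists X : 'cV[R]_n, forall l j, `|X j 0 - u l j 0| <= e l.
Proof.
move=> cu; pose S j := [set u k j 0 - e k | k in [set: nat]]%classic.
have S0 j : S j (u 0%N j 0 - e 0%N) by exists 0%N.
have S_le j l : forall y, S j y -> y <= u l j 0 + e l.
  by move=> _ [k _ <-]; have := cu k l j; rewrite ler_norml => /andP[_]; lra.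
have S_sup j : has_sup (S j).
  by split; [exists (u 0%N j 0 - e 0%N); exact: S0 | exists (u 0%N j 0 + e 0%N); exact: S_le].
exists (\col_j sup (S j)) => l j; rewrite mxE ler_norml; apply/andP; split.
  suff : u l j 0 - e l <= sup (S j) by lra.
  by apply: sup_upper_bound => //; exists l.
suff : sup (S j) <= u l j 0 + e l by lra.
by apply: ge_sup; [exists (u 0%N j 0 - e 0%N); exact: S0 | exact: S_le].
Qed.

End RealFacts.

Section StronglyConvex.
Variables (R : realType) (n : nat) (f : 'cV[R]_n -> R).
Hypothesis f_sc : strongly_convex1 f.

Lemma sc_convex x y t : 0 <= t <= 1 ->
  f (t *: x + (1 - t) *: y) <= t * f x + (1 - t) * f y.
Proof.
move=> t01; apply: le_trans (f_sc x y t01) _; case/andP: t01 => t0 t1.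
suff : 0 <= t * (1 - t) / 2 * sqnorm2 (x - y) by lra.
by rewrite !mulr_ge0 ?sqnorm2_ge0 ?invr_ge0 ?subr_ge0.
Qed.

Lemma sc_convex_half x y : f x <= 2^-1 * f (x + y) + 2^-1 * f (x - y).
Proof.
have h01 : 0 <= (2^-1 : R) <= 1 by apply/andP; split; lra.
have := sc_convex (x + y) (x - y) h01.
have -> : 2^-1 *: (x + y) + (1 - 2^-1) *: (x - y) = x.
  by apply/matrixP => i j; rewrite !mxE; field.
lra.
Qed.

Lemma sc_box_ub_partial k p : exists U, forall w, in_box 1 w ->
  (forall j : 'I_n, (k <= j)%N -> w j 0 = 0) -> f (p + w) <= U.
Proof.
elim: k p => [|k IH] p.
  exists (f p) => w _ w0.
  suff -> : w = 0 by rewrite addr0.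
  by apply/matrixP => i j; rewrite (ord1 j) mxE w0.
have [kn|nk] := ltnP k n; last first.
  have [U HU] := IH p; exists U => w w1 w0; apply: HU => // j kj.
  by have := ltn_ord j; lia.
pose e : 'cV[R]_n := delta_mx (Ordinal kn) 0.
have [U1 H1] := IH (p + e); have [U2 H2] := IH (p - e).
exists (Num.max U1 U2) => w w1 w0.
pose t := w (Ordinal kn) 0; pose w' := w - t *: e.
have w'E j : w' j 0 = if j == Ordinal kn then 0 else w j 0.
  by rewrite !mxE eqxx andbT; case: eqP => [->|_]; rewrite ?mulr1 ?subrr ?mulr0 ?subr0.
have w'1 : in_box 1 w' by move=> j; rewrite w'E; case: eqP; rewrite ?normr0.
have w'0 (j : 'I_n) : (k <= j)%N -> w' j 0 = 0.
  rewrite w'E; case: eqP => // /eqP jk kj; apply: w0.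
  suff : (j : nat) != k by lia.
  by apply: contra jk => /eqP jk; apply/eqP/val_inj.
have /andP[t_ge t_le] : -1 <= t <= 1 by rewrite -ler_norml; exact: w1.
pose lam := (1 + t) / 2.
have lam01 : 0 <= lam <= 1 by apply/andP; split; rewrite /lam; lra.
have -> : p + w = lam *: (p + e + w') + (1 - lam) *: (p - e + w').
  by apply/matrixP => i j; rewrite !mxE /lam; field.
apply: le_trans (sc_convex _ _ lam01) _.
set V := Num.max U1 U2.
have V1 : U1 <= V by rewrite le_max lexx.
have V2 : U2 <= V by rewrite le_max lexx orbT.
have f1 := H1 w' w'1 w'0; have f2 := H2 w' w'1 w'0.
have : lam * f (p + e + w') <= lam * V by apply: ler_wpM2l; lra.
have : (1 - lam) * f (p - e + w') <= (1 - lam) * V by apply: ler_wpM2l; lra.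
lra.
Qed.

Lemma sc_box_ub p : exists U, forall w, in_box 1 w -> f (p + w) <= U.
Proof.
have [U HU] := sc_box_ub_partial n p; exists U => w w1; apply: HU => // j nj.
by have := ltn_ord j; lia.
Qed.

Lemma sc_box_lb p : exists L, forall w, in_box 1 w -> L <= f (p + w).
Proof.
have [U HU] := sc_box_ub p; exists (2 * f p - U) => w w1.
have := sc_convex_half p w.
have : f (p - w) <= U by apply: HU => j; rewrite mxE normrN.
lra.
Qed.

(* [X] is the midpoint of [u] and [X + h], and [X + h] lies between [X] and the
   point [X + h / s] of a box where [f] is bounded. *)
Lemma sc_le_near X : exists C, forall u s, 0 < s <= 1 -> in_box s (X - u) ->
  f X <= f u + s * C.
Proof.
have [U HU] := sc_box_ub X; exists (U - f X) => u s /andP[s0 s1] us.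
pose h := X - u.
have s01 : 0 <= s <= 1 by apply/andP; split; lra.
have half : f X <= 2^-1 * f (X + h) + 2^-1 * f u.
  by have := sc_convex_half X h; rewrite /h subKr.
have far : f (X + h) <= s * f (X + s^-1 *: h) + (1 - s) * f X.
  have := sc_convex (X + s^-1 *: h) X s01.
  suff -> : s *: (X + s^-1 *: h) + (1 - s) *: X = X + h by [].
  by apply/matrixP => i j; rewrite !mxE; field; rewrite gt_eqF.
have : s * f (X + s^-1 *: h) <= s * U.
  apply: ler_wpM2l; first lra.
  apply: HU => j; rewrite mxE normrM gtr0_norm ?invr_gt0 //.
  by rewrite ler_pdivrMl // mulr1; exact: us.
nra.
Qed.

Lemma sc_quadratic_growth : exists c0 c1, forall x,
  c0 - c1 * l1norm x + sqnorm2 x / 4 <= f x.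
Proof.
have [L HL] := sc_box_lb 0.
exists (2 * (L - f 0) + f 0), (f 0 - L) => x.
have l0 : 0 <= l1norm x by rewrite sumr_ge0.
pose a := l1norm x + 2; pose t := a^-1.
have a0 : 0 < a by rewrite /a; lra.
have ta : t * a = 1 by rewrite mulVf // gt_eqF.
have t0 : 0 < t by rewrite invr_gt0.
have t_half : t <= 2^-1 by rewrite lef_pV2 ?posrE /a; lra.
have t01 : 0 <= t <= 1 by apply/andP; split; lra.
have tx1 : in_box 1 (t *: x).
  move=> j; rewrite mxE normrM gtr0_norm // ler_pdivrMl // mulr1.
  rewrite /a /l1norm (bigD1 j) //=.
  suff : 0 <= \sum_(i | i != j) `|x i 0| by lra.
  by rewrite sumr_ge0.
have := HL _ tx1; rewrite add0r.
have := f_sc x 0 t01; rewrite scaler0 addr0 subr0.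
have N0 := sqnorm2_ge0 x; set N := sqnorm2 x => sc_tx L_tx.
have : a * L <= f x + (a - 1) * f 0 - (1 - t) / 2 * N.
  have : a * L <= a * (t * f x + (1 - t) * f 0 - t * (1 - t) / 2 * N).
    by rewrite ler_pM2l //; lra.
  suff -> : a * (t * f x + (1 - t) * f 0 - t * (1 - t) / 2 * N)
    = (t * a) * f x + (a - t * a) * f 0 - (t * a) * (1 - t) / 2 * N.
    by rewrite ta !mul1r.
  by ring.
have : N / 4 <= (1 - t) / 2 * N.
  rewrite -subr_ge0 (_ : _ - _ = (2^-1 - t) / 2 * N); last by field.
  by rewrite !mulr_ge0 // subr_ge0.
rewrite /a; lra.
Qed.

End StronglyConvex.

Lemma derive1_sandwich (R : realType) (F : R -> R) c :
  (forall h, h != 0 -> `|h^-1 * (F h - F 0) - c| <= `|h|) -> derive1 F 0 = c.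
Proof.
move=> H; apply: cvg_lim => //; apply/cvgrPdist_le => e e0.
near=> h.
have h0 : h != 0 by near: h; exact: withinT.
rewrite addr0 distrC; apply: le_trans (H _ h0) _.
by near: h; exact: dnbhs0_le.
Unshelve. all: by end_near.
Qed.

Section Conjugate.
Variables (R : realType) (n : nat) (f : 'cV[R]_n -> R).
Hypothesis f_sc : strongly_convex1 f.

Definition conj_obj (d x : 'cV[R]_n) := dotv d x - f x.

Lemma conj_obj_sconcave d x y t : 0 <= t <= 1 ->
  t * conj_obj d x + (1 - t) * conj_obj d y + t * (1 - t) / 2 * sqnorm2 (x - y)
  <= conj_obj d (t *: x + (1 - t) *: y).
Proof. by move=> t01; have := f_sc x y t01; rewrite /conj_obj dotvDr !dotvZr; lra. Qed.

Lemma conj_obj_bounded d : exists K, forall x, conj_obj d x <= K.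
Proof.
have [c0 [c1 grow]] := sc_quadratic_growth f_sc.
exists (\sum_j (`|d j 0| + c1) ^+ 2 - c0) => x.
suff : \sum_j (d j 0 * x j 0 + c1 * `|x j 0| - x j 0 ^+ 2 / 4)
       <= \sum_j (`|d j 0| + c1) ^+ 2.
  have := grow x; rewrite /conj_obj /dotv /l1norm sqnorm2E.
  rewrite !sumrB big_split /= -mulr_sumr -mulr_suml; lra.
apply: ler_sum => j _.
have := ler_norm (d j 0 * x j 0); rewrite normrM.
have := real_normK (num_real (x j 0)); have := normr_ge0 (x j 0).
have := sqr_ge0 (`|x j 0| / 2 - (`|d j 0| + c1)); nra.
Qed.

Lemma has_sup_conj_obj d : has_sup [set dotv d x - f x | x in [set: 'cV[R]_n]]%classic.
Proof.
have [K HK] := conj_obj_bounded d; split; first by exists (dotv d 0 - f 0); exists 0.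
by exists K => _ [x _ <-]; exact: HK.
Qed.

Lemma fconj_ge d x : conj_obj d x <= fconj f d.
Proof. by apply: (sup_upper_bound (has_sup_conj_obj d)); exists x. Qed.

Lemma fconj_le d K : (forall x, conj_obj d x <= K) -> fconj f d <= K.
Proof.
move=> HK; apply: ge_sup; first by exists (dotv d 0 - f 0); exists 0.
by move=> _ [x _ <-]; exact: HK.
Qed.

Lemma fconj_adherent d e : 0 < e -> exists x, fconj f d - e < conj_obj d x.
Proof. by move=> e0; have [_ [x _ <-] ?] := sup_adherent e0 (has_sup_conj_obj d); exists x. Qed.

Lemma near_max_sqnorm2_le d u v e1 e2 :
  fconj f d - e1 <= conj_obj d u -> fconj f d - e2 <= conj_obj d v ->
  sqnorm2 (u - v) <= 4 * (e1 + e2).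
Proof.
have t01 : 0 <= (2^-1 : R) <= 1 by apply/andP; split; lra.
have := conj_obj_sconcave d u v t01; have := fconj_ge d (2^-1 *: u + (1 - 2^-1) *: v).
lra.
Qed.

(* A maximising sequence is Cauchy by strong concavity; its coordinatewise
   limit is a maximiser because [f] is upper semicontinuous. *)
Lemma conj_obj_attained d : exists X, conj_obj d X = fconj f d.
Proof.
pose e (k : nat) : R := k.+1%:R^-1.
have e0 k : 0 < e k by rewrite invr_gt0 ltr0Sn.
have e1 k : e k <= 1 by rewrite invf_le1 ?ltr0Sn // ler1n.
have [u hu] : {u : nat -> 'cV[R]_n & forall k, fconj f d - e k ^+ 2 / 4 < conj_obj d (u k)}.
  apply: (@choice _ _ (fun k x => fconj f d - e k ^+ 2 / 4 < conj_obj d x)) => k.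
  by apply: fconj_adherent; rewrite divr_gt0 ?exprn_gt0.
have [X uX] : exists X : 'cV[R]_n, forall l j, `|X j 0 - u l j 0| <= e l.
  apply: cauchy_coord_sup => k l j.
  have uk_ul := near_max_sqnorm2_le (ltW (hu k)) (ltW (hu l)).
  have := sqr_coord_le_sqnorm2 (u k - u l) j; rewrite !mxE => ukl_j.
  have ekl0 : 0 <= e k + e l by rewrite addr_ge0 // ltW.
  rewrite -(ger0_norm ekl0) -ler_sqr ?nnegrE // !real_normK ?num_real //.
  apply: le_trans ukl_j _; apply: le_trans uk_ul _.
  have : 0 <= e k * e l by rewrite mulr_ge0 // ltW.
  have -> : (e k + e l) ^+ 2 = e k ^+ 2 + e l ^+ 2 + 2 * (e k * e l) by ring.
  lra.
have [C fX_le] := sc_le_near f_sc X.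
exists X; apply/eqP; rewrite eq_le fconj_ge /=.
suff : f X - dotv d X + fconj f d <= 0 by rewrite /conj_obj; lra.
apply: (@le0_of_le_div_succ _ _ (C + l1norm d + 4^-1)) => l.
have el := e0 l; have el1 := e1 l; rewrite -[_ / _]/((C + l1norm d + 4^-1) * e l).
have hbox : in_box (e l) (X - u l) by move=> j; rewrite !mxE; exact: uX.
have := fX_le _ _ (introT andP (conj el el1)) hbox.
have : - dotv d (X - u l) <= l1norm d * e l.
  by rewrite -dotvNr; apply: dotv_le_box => j; rewrite mxE normrN; exact: hbox.
have := hu l; rewrite /conj_obj dotvBr.
have : e l ^+ 2 / 4 <= e l / 4 by rewrite ler_pM2r // expr2 ger_pMl.
lra.
Qed.

Section Argmax.
Variables (d X : 'cV[R]_n).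
Hypothesis X_max : conj_obj d X = fconj f d.

Lemma conj_argmax_sc x : f X + dotv d (x - X) + 2^-1 * sqnorm2 (x - X) <= f x.
Proof.
set N := sqnorm2 (x - X); have N0 : 0 <= N := sqnorm2_ge0 _.
suff : conj_obj d x - conj_obj d X + N / 2 <= 0 by rewrite /conj_obj dotvBr; lra.
apply: (le0_of_le_scaled (c := N / 2)) => [|t /andP[t0 t1]]; first by rewrite divr_ge0.
have t01 : 0 <= t <= 1 by apply/andP; split; lra.
have := conj_obj_sconcave d x X t01; have := fconj_ge d (t *: x + (1 - t) *: X).
rewrite -X_max -/N; set gx := conj_obj d x; set gX := conj_obj d X => le_max sc.
have : t * (gx - gX + (1 - t) / 2 * N) <= 0.
  have -> : t * (gx - gX + (1 - t) / 2 * N)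
    = t * gx + (1 - t) * gX + t * (1 - t) / 2 * N - gX by ring.
  lra.
rewrite pmulr_rle0 // (_ : (1 - t) / 2 * N = N / 2 - t * (N / 2)); first lra.
by ring.
Qed.

Lemma fconj_subgrad d' : fconj f d + dotv (d' - d) X <= fconj f d'.
Proof. by have := fconj_ge d' X; rewrite -X_max /conj_obj dotvBl; lra. Qed.

Lemma fconj_smooth d' :
  fconj f d' <= fconj f d + dotv (d' - d) X + 2^-1 * sqnorm2 (d' - d).
Proof.
apply: fconj_le => x.
have := conj_argmax_sc x; have := dotv_le_sqnorm2 (d' - d) (x - X).
move: X_max; rewrite /conj_obj !dotvBl !dotvBr; lra.
Qed.

End Argmax.

(* [fconj f] is squeezed between its tangent at [d] and that tangent plus a
   quadratic, so its partial derivatives are the coordinates of the maximiser. *)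
Lemma grad_fconj_argmax d : conj_obj d (grad (fconj f) d) = fconj f d.
Proof.
have [X X_max] := conj_obj_attained d.
suff -> : grad (fconj f) d = X by [].
apply/matrixP => j k; rewrite (ord1 k) mxE.
apply: derive1_sandwich => h h0; rewrite scale0r addr0.
have dh : d + h *: delta_mx j 0 - d = h *: delta_mx j 0 by rewrite addrC addKr.
have := fconj_subgrad X_max (d + h *: delta_mx j 0).
have := fconj_smooth X_max (d + h *: delta_mx j 0).
rewrite dh dotvZl dotv_delta sqnorm2Z sqnorm2_delta mulr1.
set F := fconj f (d + _); set S := fconj f d => F_le F_ge.
have hh : 0 < `|h| by rewrite normr_gt0.
have -> : h^-1 * (F - S) - X j 0 = h^-1 * (F - S - h * X j 0) by field.
rewrite normrM normrV ?unitfE // ler_pdivrMl // ger0_norm; last lra.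
rewrite -expr2 real_normK ?num_real //; lra.
Qed.

End Conjugate.

Lemma bregman_fconj_ge (R : realType) n (f : 'cV[R]_n -> R) d x :
  strongly_convex1 f ->
  2^-1 * sqnorm2 (grad (fconj f) d - x) <= bregman f d (grad (fconj f) d) x.
Proof.
move=> f_sc; have := conj_argmax_sc f_sc (grad_fconj_argmax f_sc d) x.
by rewrite /bregman -sqnorm2N opprB; lra.
Qed.

Section OperatorNorm.
Variables (R : realType) (p q : nat) (B : 'M[R]_(p, q)).

Lemma sqr_norm2 n (x : 'cV[R]_n) : norm2 x ^+ 2 = sqnorm2 x.
Proof. by rewrite sqr_sqrtr // sqnorm2_ge0. Qed.

Lemma norm2_mulmx_bounded x : norm2 x = 1 ->
  norm2 (B *m x) <= Num.sqrt (\sum_r (\sum_j `|B r j|) ^+ 2).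
Proof.
move=> x1; rewrite ler_sqrt ?sumr_ge0 // => [|r _]; last exact: sqr_ge0.
rewrite sqnorm2E; apply: ler_sum => r _.
have x_le1 j : `|x j 0| <= 1.
  rewrite -(ler_pXn2r (isT : 0 < 2)%N) ?nnegrE // expr1n real_normK ?num_real //.
  by rewrite -(expr1n R 2) -x1 sqr_norm2 sqr_coord_le_sqnorm2.
rewrite -real_normK ?num_real // ler_sqr ?nnegrE ?sumr_ge0 //.
rewrite mxE; apply: le_trans (ler_norm_sum _ _ _) _; apply: ler_sum => j _.
by rewrite normrM ler_piMr.
Qed.

Lemma norm2_mulmx_le_opnorm2 x : norm2 x = 1 -> norm2 (B *m x) <= opnorm2 B.
Proof.
move=> x1; apply: sup_upper_bound; last by exists x.
split; first by exists (norm2 (B *m x)), x.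
by exists (Num.sqrt (\sum_r (\sum_j `|B r j|) ^+ 2)) => _ [y y1 <-]; exact: norm2_mulmx_bounded.
Qed.

Lemma sqnorm2_mulmx_le x : sqnorm2 (B *m x) <= opnorm2 B ^+ 2 * sqnorm2 x.
Proof.
have [->|x0] := eqVneq x 0; first by rewrite mulmx0 /sqnorm2 !dotv0r mulr0.
have s0 : 0 < norm2 x by rewrite sqrtr_gt0 lt_def sqnorm2_eq0 x0 sqnorm2_ge0.
have x'1 : norm2 ((norm2 x)^-1 *: x) = 1.
  by rewrite {1}/norm2 sqnorm2Z -sqr_norm2 -exprMn mulVf ?gt_eqF // expr1n sqrtr1.
have Bx' := norm2_mulmx_le_opnorm2 x'1.
have op0 : 0 <= opnorm2 B := le_trans (sqrtr_ge0 _) Bx'.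
move: Bx'; rewrite -ler_sqr ?nnegrE ?sqrtr_ge0 //.
rewrite sqr_norm2 -scalemxAr sqnorm2Z exprVn sqr_norm2 mulrC.
by rewrite ler_pdivrMr // -sqr_norm2 exprn_gt0.
Qed.

Lemma sqnorm2_trmx_mulmx_le w : sqnorm2 (B^T *m w) <= opnorm2 B ^+ 2 * sqnorm2 w.
Proof.
set v := B^T *m w; set L := opnorm2 B ^+ 2.
have vv : sqnorm2 v = dotv w (B *m v) by rewrite {1}/sqnorm2 {1}/v dotv_trmx_mul.
have Bv := sqnorm2_mulmx_le v; rewrite -/L in Bv.
have [L0|L_gt0] := eqVneq L 0.
  move: Bv; rewrite L0 mul0r => Bv.
  have /eqP : sqnorm2 (B *m v) = 0 by apply/eqP; rewrite eq_le Bv sqnorm2_ge0.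
  by rewrite vv sqnorm2_eq0 => /eqP ->; rewrite dotv0r mul0r.
have Lp : 0 < L by rewrite lt_def L_gt0 sqr_ge0.
(* scaled AM-GM: 2 L <w, B v> <= L^2 |w|^2 + |B v|^2 <= L^2 |w|^2 + L |v|^2 *)
have := dotv_le_sqnorm2 (L *: w) (B *m v).
rewrite dotvZl sqnorm2Z -vv => amgm.
rewrite -(ler_pM2l Lp); nra.
Qed.

End OperatorNorm.

Section Blocks.
Variables (R : realType) (m n M : nat) (blk : 'I_m -> 'I_M) (A : 'M[R]_(m, n)).
Implicit Types (u w y : 'cV[R]_m).

Lemma blockvE y i r : blockv blk y i r 0 = if blk r == i then y r 0 else 0.
Proof. by rewrite mxE. Qed.

Lemma sum_blockv y : \sum_i blockv blk y i = y.
Proof.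
apply/matrixP => r k; rewrite (ord1 k) summxE (bigD1 (blk r)) //= big1.
  by rewrite blockvE eqxx addr0.
by move=> i ri; rewrite blockvE eq_sym (negbTE ri).
Qed.

Lemma dotv_blockv u w i : dotv (blockv blk u i) w = dotv u (blockv blk w i).
Proof. by apply: eq_bigr => r _; rewrite !blockvE; case: ifP; rewrite ?mul0r ?mulr0. Qed.

Lemma blockv_blockv w i j :
  blockv blk (blockv blk w i) j = if i == j then blockv blk w i else 0.
Proof.
case: eqVneq => [<-|ij]; apply/matrixP => r k; rewrite !mxE; first by case: (blk r == i).
by case: eqP => // ->; rewrite eq_sym (negbTE ij).
Qed.

Lemma blockv_id w i : blockv blk (blockv blk w i) i = blockv blk w i.
Proof. by rewrite blockv_blockv eqxx. Qed.

Lemma dotv_blockv_self w i : dotv w (blockv blk w i) = sqnorm2 (blockv blk w i).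
Proof. by rewrite /sqnorm2 dotv_blockv blockv_id. Qed.

Lemma blockvB u w i : blockv blk (u - w) i = blockv blk u i - blockv blk w i.
Proof. by apply/matrixP => r k; rewrite !mxE; case: ifP; rewrite ?subr0. Qed.

Lemma blockvZ a w i : blockv blk (a *: w) i = a *: blockv blk w i.
Proof. by apply/matrixP => r k; rewrite !mxE; case: ifP; rewrite ?mulr0. Qed.

Lemma trmx_mul_blockv w i : A^T *m blockv blk w i = (blockA blk A i)^T *m w.
Proof.
apply/matrixP => j k; rewrite !mxE; apply: eq_bigr => r _; rewrite !mxE.
by rewrite (ord1 k); case: ifP; rewrite ?mulr0 ?mul0r.
Qed.

Lemma sqnorm2_trmx_mul_blockv_le w i :
  sqnorm2 (A^T *m blockv blk w i) <= blocknorm blk A i ^+ 2 * sqnorm2 (blockv blk w i).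
Proof. by rewrite -{1}blockv_id trmx_mul_blockv; exact: sqnorm2_trmx_mulmx_le. Qed.

Lemma sqnormB_ge0 y : 0 <= sqnormB blk A y.
Proof. by rewrite sumr_ge0 // => i _; rewrite mulr_ge0 ?sqr_ge0 ?sqnorm2_ge0. Qed.

Lemma sqnormB_update u g c i :
  sqnormB blk A (u - c *: blockv blk g i) = sqnormB blk A u
   - 2 * c * blocknorm blk A i ^+ 2 * dotv u (blockv blk g i)
   + c ^+ 2 * blocknorm blk A i ^+ 2 * sqnorm2 (blockv blk g i).
Proof.
rewrite /sqnormB (bigD1 i) //= [in RHS](bigD1 i) //=.
under eq_bigr => j ji do rewrite blockvB blockvZ blockv_blockv eq_sym (negbTE ji) scaler0 subr0.
rewrite blockvB blockvZ blockv_blockv eqxx sqnorm2B sqnorm2Z dotvZr.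
rewrite dotv_blockv blockv_id; ring.
Qed.

Lemma blocknorm_gt0 i :
  (exists2 r, blk r = i & exists j, A r j != 0) -> 0 < blocknorm blk A i.
Proof.
case=> r ri [j Arj].
have e1 : norm2 (delta_mx j 0 : 'cV[R]_n) = 1 by rewrite /norm2 sqnorm2_delta sqrtr1.
apply: lt_le_trans (norm2_mulmx_le_opnorm2 _ e1); rewrite sqrtr_gt0.
apply: lt_le_trans (sqr_coord_le_sqnorm2 _ r).
rewrite (_ : _ r 0 = A r j) ?lt_def ?sqrf_eq0 ?Arj ?sqr_ge0 //.
rewrite mxE (bigD1 j) //= big1 => [|k kj]; first by rewrite !mxE ri !eqxx mulr1 addr0.
by rewrite !mxE (negbTE kj) mulr0.
Qed.

End Blocks.

Section Theta.
Variable R : realType.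

Definition theta_next (th : R) := (Num.sqrt (th ^+ 4 + 4 * th ^+ 2) - th ^+ 2) / 2.

Lemma theta_next_props th : 0 < th ->
  [/\ 0 < theta_next th, theta_next th < 1
    & theta_next th ^+ 2 = th ^+ 2 * (1 - theta_next th)].
Proof.
move=> th0; rewrite /theta_next; set q := Num.sqrt _.
have t2 : 0 < th ^+ 2 by rewrite exprn_gt0.
have qq : q ^+ 2 = th ^+ 2 * th ^+ 2 + 4 * th ^+ 2.
  by rewrite sqr_sqrtr -?exprD // addr_ge0 ?mulr_ge0 ?exprn_ge0 // ltW.
have q_gt : th ^+ 2 < q.
  by rewrite -(ltr_pXn2r (isT : 0 < 2)%N) ?nnegrE ?sqrtr_ge0 ?ltW // qq ltrDl mulr_gt0.
have eq : ((q - th ^+ 2) / 2) ^+ 2 = th ^+ 2 * (1 - (q - th ^+ 2) / 2).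
  have -> : ((q - th ^+ 2) / 2) ^+ 2 = (q ^+ 2 - 2 * th ^+ 2 * q + th ^+ 2 ^+ 2) / 4 by field.
  by rewrite qq; field.
have pos : 0 < (q - th ^+ 2) / 2 by rewrite divr_gt0 // subr_gt0.
split => //; have : 0 < th ^+ 2 * (1 - (q - th ^+ 2) / 2) by rewrite -eq exprn_gt0.
by rewrite pmulr_rgt0 // subr_gt0.
Qed.

Lemma theta_next_weight th : 0 < th ->
  (1 - theta_next th) / theta_next th ^+ 2 = th^-2.
Proof.
move=> th0; have [_ p1 eq] := theta_next_props th0.
by rewrite eq invfM mulrCA mulfV ?mulr1 // subr_eq0 gt_eqF.
Qed.

(* With [u = 1 / theta_next th] and [w = 1 / th], the recursion reads
   [(u - 1/2)^2 = w^2 + 1/4]. *)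
Lemma theta_next_inv th : 0 < th -> th^-1 + 2^-1 <= (theta_next th)^-1.
Proof.
move=> th0; have [p0 p1 eq] := theta_next_props th0.
set u := (theta_next th)^-1; set w := th^-1.
have u1 : 1 < u by rewrite /u invf_gt1.
have w0 : 0 < w by rewrite invr_gt0.
have key : (u - 2^-1) ^+ 2 = w ^+ 2 + 4^-1.
  have -> : w ^+ 2 = (u * w) ^+ 2 * theta_next th ^+ 2.
    by rewrite /u exprMn mulrAC -exprMn mulVf ?gt_eqF // expr1n mul1r.
  rewrite eq /w /u; field.
  by rewrite !gt_eqF.
have : w ^+ 2 <= (u - 2^-1) ^+ 2 by rewrite key lerDl.
by rewrite ler_sqr ?nnegrE; [lra | exact: ltW | lra].
Qed.

Lemma iter_theta_next_bounds th k : 0 < th <= 1 ->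
  0 < iter k theta_next th <= 1 /\ th^-1 + k%:R / 2 <= (iter k theta_next th)^-1.
Proof.
move=> th01; elim: k => [|k [/andP[th_k0 _] IH]] /=; first by rewrite mul0r addr0.
have [p0 p1 _] := theta_next_props th_k0.
rewrite p0 ltW //=; have := theta_next_inv th_k0.
suff -> : k.+1%:R / 2 = k%:R / 2 + 2^-1 :> R by lra.
by rewrite -natr1 mulrDl mul1r.
Qed.

End Theta.

Arguments theta_next {R}.

Lemma sum_tupleS (R : realType) (T : finType) k (F : seq T -> R) :
  \sum_(t : k.+1.-tuple T) F t = \sum_(x : T) \sum_(t : k.-tuple T) F (x :: t).
Proof.
rewrite pair_big /= (reindex (fun p : T * k.-tuple T => [tuple of p.1 :: p.2])) //=.
exists (fun t : k.+1.-tuple T => (thead t, [tuple of behead t])) => [[x t] _|t _].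
  by congr (_, _); apply: val_inj.
by rewrite [in RHS](tuple_eta t); apply: val_inj.
Qed.

Section Expectation.
Variables (R : realType) (M : nat).
Implicit Types (X Y : seq 'I_M -> R).

Lemma expect_le k X Y : (forall t : k.-tuple 'I_M, X t <= Y t) ->
  expect_k k X <= expect_k k Y.
Proof.
move=> XY; rewrite ler_wpM2l ?invr_ge0 ?exprn_ge0 //.
by apply: ler_sum => t _; exact: XY.
Qed.

Lemma expect_ge0 k X : (forall t : k.-tuple 'I_M, 0 <= X t) -> 0 <= expect_k k X.
Proof.
move=> X0; rewrite mulr_ge0 ?invr_ge0 ?exprn_ge0 //.
by apply: sumr_ge0 => t _; exact: X0.
Qed.

Lemma expect_mulr k c X : expect_k k (fun ix => c * X ix) = c * expect_k k X.
Proof. by rewrite /expect_k -mulr_sumr mulrCA. Qed.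

Lemma expect0 X : expect_k 0 X = X [::].
Proof.
rewrite /expect_k expr0 invr1 mul1r (eq_bigr (fun=> X [::])) => [|t _]; last by rewrite tuple0.
by rewrite sumr_const card_tuple expn0.
Qed.

Lemma expectS k X :
  expect_k k.+1 X = M%:R^-1 * \sum_i expect_k k (fun ix => X (i :: ix)).
Proof. by rewrite /expect_k sum_tupleS -mulr_sumr exprS invfM -mulrA. Qed.

Section Supermartingale.
Variables (T : Type) (step : T -> 'I_M -> T) (V : T -> R) (P : T -> Prop).
Hypotheses (M_gt0 : (0 < M)%N) (P_step : forall s i, P s -> P (step s i))
  (V_step : forall s, P s -> \sum_i V (step s i) <= M%:R * V s).

Lemma expect_foldl_le k s : P s -> expect_k k (fun ix => V (foldl step s ix)) <= V s.
Proof.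
elim: k s => [|k IH] s Ps; first by rewrite expect0.
rewrite expectS; apply: le_trans (_ : M%:R^-1 * \sum_i V (step s i) <= _).
  apply: ler_wpM2l; first by rewrite invr_ge0.
  by apply: ler_sum => i _; exact/IH/P_step.
by rewrite ler_pdivrMl ?ltr0n //; exact: V_step.
Qed.

End Supermartingale.

End Expectation.

Section DualObjective.
Variables (R : realType) (m n : nat) (A : 'M[R]_(m, n)) (b : 'cV[R]_m)
  (f : 'cV[R]_n -> R).
Hypothesis f_sc : strongly_convex1 f.

Definition Psi (y : 'cV[R]_m) := fconj f (A^T *m y) - dotv b y.
Definition Psi_grad (v : 'cV[R]_m) := A *m grad (fconj f) (A^T *m v) - b.

Lemma Psi_convex u v : Psi v + dotv (Psi_grad v) (u - v) <= Psi u.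
Proof.
have := fconj_subgrad f_sc (grad_fconj_argmax f_sc (A^T *m v)) (A^T *m u).
rewrite -mulmxBr dotv_trmx_mul /Psi /Psi_grad (dotvC (_ - b)) !dotvBl !dotvBr.
rewrite !(dotvC b); lra.
Qed.

Lemma Psi_smooth v h :
  Psi (v + h) <= Psi v + dotv (Psi_grad v) h + 2^-1 * sqnorm2 (A^T *m h).
Proof.
have := fconj_smooth f_sc (grad_fconj_argmax f_sc (A^T *m v)) (A^T *m (v + h)).
rewrite -mulmxBr (addrC v) addrK dotv_trmx_mul /Psi /Psi_grad.
rewrite dotvBl dotvDr (dotvC (A *m _)); lra.
Qed.

Lemma Psi_momentum th y z u v : 0 < th <= 1 -> v = (1 - th) *: y + th *: z ->
  th^-2 * (Psi v - Psi u) - th^-1 * dotv (Psi_grad v) (z - u)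
  <= (1 - th) / th ^+ 2 * (Psi y - Psi u).
Proof.
move=> /andP[th0 th1] vE.
have := Psi_convex u v; have := Psi_convex y v.
rewrite !dotvBr; set g := Psi_grad v; set Pv := Psi v => c_y c_u.
have gv : dotv g v = (1 - th) * dotv g y + th * dotv g z by rewrite vE dotvDr !dotvZr.
have key : Pv - Psi u - th * (dotv g z - dotv g u) <= (1 - th) * (Psi y - Psi u).
  by nra.
have th2 : 0 < th ^+ 2 by rewrite exprn_gt0.
rewrite (_ : _ - _ = th^-2 * (Pv - Psi u - th * (dotv g z - dotv g u))); last first.
  by field; rewrite gt_eqF.
rewrite (_ : _ / _ * _ = th^-2 * ((1 - th) * (Psi y - Psi u))); last by field; rewrite gt_eqF.
by rewrite ler_wpM2l // invr_ge0 ltW.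
Qed.

End DualObjective.

Section ARBK.
Variables (R : realType) (m n M : nat) (A : 'M[R]_(m, n)) (b : 'cV[R]_m)
  (f : 'cV[R]_n -> R) (blk : 'I_m -> 'I_M) (yhat : 'cV[R]_m).
Hypotheses (f_sc : strongly_convex1 f) (M_gt0 : (0 < M)%N)
  (blocknorm_pos : forall i, 0 < blocknorm blk A i).

Local Notation Psi := (Psi A b f).
Local Notation Psi_grad := (Psi_grad A b f).
Local Notation step := (arbk_step f blk A b).

Lemma Psi_block_descent v i :
  Psi (v - (blocknorm blk A i ^+ 2)^-1 *: blockv blk (Psi_grad v) i)
  <= Psi v - sqnorm2 (blockv blk (Psi_grad v) i) / (2 * blocknorm blk A i ^+ 2).
Proof.
have := Psi_smooth A b f_sc v (- (blocknorm blk A i ^+ 2)^-1 *: blockv blk (Psi_grad v) i).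
rewrite dotvZr -scalemxAr sqnorm2Z dotv_blockv_self scaleNr.
have := sqnorm2_trmx_mul_blockv_le blk A (Psi_grad v) i.
have L0 : 0 < blocknorm blk A i ^+ 2 by rewrite exprn_gt0 ?blocknorm_pos.
set L := _ ^+ 2; set K := sqnorm2 (A^T *m _); set q := sqnorm2 (blockv _ _ _) => K_le.
have : (- L^-1) ^+ 2 * K <= L^-1 * q.
  rewrite sqrrN; apply: le_trans (ler_wpM2l (sqr_ge0 _) K_le) _.
  by rewrite expr2 -mulrA mulKf ?gt_eqF.
have -> : q / (2 * L) = 2^-1 * (L^-1 * q) by field; rewrite gt_eqF.
rewrite mulNr; lra.
Qed.

Definition arbk_v (s : state R m) := (1 - st_th s) *: st_y s + st_th s *: st_z s.

Lemma arbk_stepE s i : 0 < st_th s ->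
  let G := blockv blk (Psi_grad (arbk_v s)) i in
  step s i = St (arbk_v s - (blocknorm blk A i ^+ 2)^-1 *: G)
    (st_z s - ((M%:R * st_th s)^-1 / blocknorm blk A i ^+ 2) *: G)
    (theta_next (st_th s)).
Proof.
case: s => y z th /= th0; rewrite /arbk_step /arbk_v /= -/(Psi_grad _).
congr St; congr (_ + _); rewrite addrAC subrr add0r scalerN scalerA mulrA mulfV ?mul1r //.
by rewrite mulf_neq0 ?gt_eqF ?ltr0n.
Qed.

Definition lyapunov (s : state R m) :=
  (1 - st_th s) / st_th s ^+ 2 * (Psi (st_y s) - Psi yhat)
  + M%:R ^+ 2 / 2 * sqnormB blk A (st_z s - yhat).

Lemma lyapunov_step_le s i : 0 < st_th s ->
  lyapunov (step s i) <= st_th s ^- 2 * (Psi (arbk_v s) - Psi yhat)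
    + M%:R ^+ 2 / 2 * sqnormB blk A (st_z s - yhat)
    - M%:R / st_th s * dotv (st_z s - yhat) (blockv blk (Psi_grad (arbk_v s)) i).
Proof.
move=> th0; rewrite /lyapunov arbk_stepE //= theta_next_weight //.
set th := st_th s; set G := blockv _ _ i; set L := blocknorm blk A i ^+ 2.
have L0 : 0 < L by rewrite exprn_gt0 ?blocknorm_pos.
have M0 : 0 < M%:R :> R by rewrite ltr0n.
rewrite [st_z s - _ - _]addrAC sqnormB_update -/L.
have := Psi_block_descent (arbk_v s) i; rewrite -/G -/L => descent.
have : th^-2 * (Psi (arbk_v s - L^-1 *: G) - Psi yhat)
       <= th^-2 * (Psi (arbk_v s) - sqnorm2 G / (2 * L) - Psi yhat).
  by apply: ler_wpM2l; [rewrite invr_ge0 exprn_ge0 // ltW | lra].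
(* the quadratic terms cancel by the choice of step sizes *)
suff -> : M%:R ^+ 2 / 2 * (sqnormB blk A (st_z s - yhat)
      - 2 * ((M%:R * th)^-1 / L) * L * dotv (st_z s - yhat) G
      + ((M%:R * th)^-1 / L) ^+ 2 * L * sqnorm2 G)
  = M%:R ^+ 2 / 2 * sqnormB blk A (st_z s - yhat)
    - M%:R / th * dotv (st_z s - yhat) G + th^-2 * (sqnorm2 G / (2 * L)) by lra.
by field; rewrite !gt_eqF.
Qed.

Lemma lyapunov_step_sum s : 0 < st_th s <= 1 ->
  \sum_i lyapunov (step s i) <= M%:R * lyapunov s.
Proof.
move=> /andP[th0 th1]; apply: le_trans (ler_sum _ (fun i _ => lyapunov_step_le i th0)) _.
rewrite sumrB sumr_const card_ord -mulr_sumr -dotv_sumr sum_blockv.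
have := Psi_momentum A b f_sc yhat (introT andP (conj th0 th1)) (erefl (arbk_v s)).
rewrite (dotvC (Psi_grad _)); set D := dotv _ _ => mom.
rewrite /lyapunov; set B := _ * sqnormB _ _ _.
rewrite (_ : _ - _ = M%:R * (st_th s ^- 2 * (Psi (arbk_v s) - Psi yhat)
                          - (st_th s)^-1 * D) + M%:R * B); last by ring.
by rewrite [in X in _ <= X]mulrDr lerD2r ler_wpM2l ?ler0n.
Qed.

Lemma arbk_state_theta ix :
  st_th (arbk_state f blk A b ix) = iter (size ix) theta_next M%:R^-1.
Proof.
rewrite /arbk_state -[M%:R^-1]/(st_th (arbk_init R m M)).
by elim: ix (arbk_init R m M) => [|i ix IH] s //=; rewrite IH -iterS iterSr.
Qed.

Hypothesis yhat_min : forall y, Psi yhat <= Psi y.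

Lemma arbk_rate k :
  expect_k k.+1 (fun ix => Psi (st_y (arbk_state f blk A b ix)) - Psi yhat)
  <= 4 * M%:R ^+ 2 / (k%:R + 2 * M%:R) ^+ 2
     * ((1 - M%:R^-1) * (Psi 0 - Psi yhat) + 2^-1 * sqnormB blk A (0 - yhat)).
Proof.
have M0 : 0 < M%:R :> R by rewrite ltr0n.
have init01 : 0 < (M%:R^-1 : R) <= 1.
  by rewrite invr_gt0 M0 invf_le1 // ler1n.
have [/andP[th0 _] th_inv] := iter_theta_next_bounds k init01.
set th := iter k theta_next _ in th0 th_inv.
set E := expect_k _ _.
have E0 : 0 <= E by apply: expect_ge0 => t; rewrite subr_ge0.
have step01 s i : 0 < st_th s <= 1 -> 0 < st_th (step s i) <= 1.
  move=> /andP[s0 _]; rewrite arbk_stepE //=.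
  by have [-> /ltW ->] := theta_next_props s0.
have : th^-2 * E <= lyapunov (arbk_init R m M).
  rewrite -expect_mulr.
  apply: le_trans (expect_foldl_le M_gt0 step01 lyapunov_step_sum k.+1 (s := arbk_init R m M) init01).
  apply: expect_le => t; rewrite /lyapunov arbk_state_theta size_tuple iterS.
  rewrite theta_next_weight // lerDl mulr_ge0 ?sqnormB_ge0 // mulr_ge0 ?sqr_ge0 //.
set C := _ * (Psi 0 - _) + _.
have -> : lyapunov (arbk_init R m M) = M%:R ^+ 2 * C.
  by rewrite /lyapunov /C /=; field; rewrite gt_eqF.
rewrite invrK in th_inv.
have Q0 : 0 < M%:R + k%:R / 2 :> R by rewrite ltr_wpDr // divr_ge0.
have : (M%:R + k%:R / 2) ^+ 2 <= th^-2.
  by rewrite -exprVn ler_sqr ?nnegrE ?(ltW Q0) // (le_trans (ltW Q0)).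
move=> Q_le E_le; have : (M%:R + k%:R / 2) ^+ 2 * E <= M%:R ^+ 2 * C.
  by apply: le_trans _ E_le; exact: ler_wpM2r.
suff -> : 4 * M%:R ^+ 2 / (k%:R + 2 * M%:R) ^+ 2 * C
          = M%:R ^+ 2 * C / (M%:R + k%:R / 2) ^+ 2.
  by rewrite ler_pdivlMr ?exprn_gt0 // mulrC.
by field; rewrite gt_eqF // ltr_wpDr // mulr_gt0.
Qed.

End ARBK.

Section StrongDuality.
Variables (R : realType) (m n : nat) (A : 'M[R]_(m, n)) (b : 'cV[R]_m)
  (f : 'cV[R]_n -> R) (xhat : 'cV[R]_n) (yhat : 'cV[R]_m).
Hypotheses (f_sc : strongly_convex1 f) (A_xhat : A *m xhat = b)
  (xhat_min : forall x, A *m x = b -> f xhat <= f x)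
  (yhat_min : forall y, Psi A b f yhat <= Psi A b f y).

Local Notation Psi := (Psi A b f).

Lemma Psi_grad_min_eq0 : Psi_grad A b f yhat = 0.
Proof.
apply/eqP; rewrite -sqnorm2_eq0.
set r := Psi_grad A b f yhat; set s := sqnorm2 r; set K := sqnorm2 (A^T *m r).
have s0 : 0 <= s := sqnorm2_ge0 r; have K0 : 0 <= K := sqnorm2_ge0 _.
set t := - s / (K + 1).
have := Psi_smooth A b f_sc yhat (t *: r); have := yhat_min (yhat + t *: r).
rewrite dotvZr -scalemxAr sqnorm2Z -[dotv r r]/s -/K => min sm.
have : 0 <= - (s ^+ 2 * (K + 2)) / (2 * (K + 1) ^+ 2).
  suff -> : - (s ^+ 2 * (K + 2)) / (2 * (K + 1) ^+ 2) = t * s + 2^-1 * (t ^+ 2 * K) by lra.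
  by rewrite /t; field; rewrite gt_eqF //; lra.
rewrite mulNr oppr_ge0 pmulr_lle0 ?invr_gt0 ?mulr_gt0 ?exprn_gt0 //; try lra.
rewrite pmulr_lle0; last lra.
by move=> s2; rewrite -sqrf_eq0 eq_le s2 sqr_ge0.
Qed.

Lemma Psi_min_value : Psi yhat = - f xhat.
Proof.
have X_max := grad_fconj_argmax f_sc (A^T *m yhat).
set X := grad _ _ in X_max.
have A_X : A *m X = b by apply/eqP; rewrite -subr_eq0; apply/eqP; exact: Psi_grad_min_eq0.
apply/eqP; rewrite eq_le; apply/andP; split.
  by have := xhat_min A_X; move: X_max; rewrite /conj_obj /Psi dotv_trmx_mul A_X dotvC; lra.
by have := fconj_ge f_sc (A^T *m yhat) xhat; rewrite /conj_obj /Psi dotv_trmx_mul A_xhat dotvC; lra.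
Qed.

Lemma bregman_fconj_gap y :
  bregman f (A^T *m y) (grad (fconj f) (A^T *m y)) xhat = Psi y - Psi yhat.
Proof.
have := grad_fconj_argmax f_sc (A^T *m y).
rewrite Psi_min_value /bregman /conj_obj /Psi dotvBr !dotv_trmx_mul A_xhat (dotvC b); lra.
Qed.

End StrongDuality.

Theorem theorem2 (R : realType) (m n M : nat)
  (A : 'M[R]_(m, n)) (b : 'cV[R]_m) (f : 'cV[R]_n -> R)
  (blk : 'I_m -> 'I_M) (xhat : 'cV[R]_n) (yhat : 'cV[R]_m) :
  (forall r : 'I_m, exists j : 'I_n, A r j != 0) ->
  (exists x : 'cV[R]_n, A *m x = b) ->
  strongly_convex1 f ->
  A *m xhat = b ->
  (forall x : 'cV[R]_n, A *m x = b -> f xhat <= f x) ->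
  (forall x : 'cV[R]_n, A *m x = b -> f x = f xhat -> x = xhat) ->
  (0 < M)%N -> consecutive_partition blk ->
  (forall y : 'cV[R]_m,
     fconj f (A^T *m yhat) - dotv b yhat <= fconj f (A^T *m y) - dotv b y) ->
  let d (ix : seq 'I_M) := A^T *m st_y (arbk_state f blk A b ix) in
  let x (ix : seq 'I_M) := grad (fconj f) (d ix) in
  let y0 : 'cV[R]_m := 0 in
  let d0 := A^T *m y0 in
  let x0 := grad (fconj f) d0 in
  let C0 := (1 - M%:R^-1) * bregman f d0 x0 xhat
            + 2^-1 * sqnormB blk A (y0 - yhat) in
  forall k : nat, (1 <= k)%N ->
    2^-1 * expect_k k (fun ix => sqnorm2 (x ix - xhat))
      <= expect_k k (fun ix => bregman f (d ix) (x ix) xhat)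
    /\ expect_k k (fun ix => bregman f (d ix) (x ix) xhat)
      <= 4 * M%:R ^+ 2 / (k%:R - 1 + 2 * M%:R) ^+ 2 * C0.
Proof.
move=> rows_nz _ f_sc A_xhat xhat_min _ M_gt0 [_ blk_onto] yhat_min d x y0 d0 x0 C0 k k_ge1.
have L_gt0 i : 0 < blocknorm blk A i.
  by have [r ri] := blk_onto i; apply: blocknorm_gt0; exists r; last exact: rows_nz.
have gapE := bregman_fconj_gap f_sc A_xhat xhat_min yhat_min.
split; first by rewrite -expect_mulr; apply: expect_le => t; exact: bregman_fconj_ge.
case: k k_ge1 => // k _; rewrite /C0 /x0 /d0 gapE -[k.+1%:R]natr1 addrK.
rewrite (_ : (fun ix => _) = fun ix => Psi A b f (st_y (arbk_state f blk A b ix)) - Psi A b f yhat).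
  exact: arbk_rate.
by apply: funext => ix; exact: gapE.
Qed.
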